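(* Let $A$ be a finite alphabet containing a distinguished element $0$, let $\nu$ be a shift-invariant probability measure on $A^{\mathbb{Z}}$, and let $\mathbf{Y}=(A^{\mathbb{Z}},\mathcal{B},\nu,S)$ with $S$ the left shift. Let $\tau$ be the cellular automaton $\tau((a_n)_n)=(\tau_0(a_n,a_{n+1}))_n$ with $\tau_0(\alpha_1,\alpha_2)=\alpha_1$ if $\alpha_1=\alpha_2$ and $0$ otherwise, and let $\xi$ be the coordinate process on $\mathbf{Y}$. Then for every $n\ge1$, $$h_\nu(\tau^n\xi,S)\le\frac{\log(\#A\, n^2)}{n}.$$
   Context: The coordinate process is $\xi_i(a)=a_i$; $\tau^n\xi$ is the process $((\tau^n a)_i)_{i\in\mathbb{Z}}$, i.e. the $S$-process generated by the finite-valued random variable $a\mapsto(\tau^na)_0$. For a finite-valued process $\eta$, $h_\nu(\eta,S)=\lim_n\frac1nH_\nu(\eta_{[0,n]})$ with $H_\nu$ Shannon entropy. *)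

From HB Require Import structures.
From mathcomp Require Import all_boot all_order all_algebra.
From mathcomp Require Import all_classical all_reals all_analysis.
Set Implicit Arguments. Unset Strict Implicit. Unset Printing Implicit Defensive.
Import Order.TTheory GRing.Theory Num.Theory.
Import numFieldTopology.Exports numFieldNormedType.Exports.
Local Open Scope classical_set_scope.
Local Open Scope ring_scope.

(* The distinguished symbol a0
   (the paper's "0") is also used as the default point (constant configuration),
   which the library's generated-sigma-algebra construction requires. *)
Definition Aseq (A : finType) (a0 : A) : Type := int -> A.
HB.instance Definition _ (A : finType) (a0 : A) := Choice.on (@Aseq A a0).
HB.instance Definition _ (A : finType) (a0 : A) :=
  isPointed.Build (@Aseq A a0) (fun _ => a0).

Definition cylinders (A : finType) (a0 : A) : set (set (@Aseq A a0)) :=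
  fun B => exists (i : int) (x : A), B = [set a : @Aseq A a0 | a i = x].

Definition AZ (A : finType) (a0 : A) := g_sigma_algebraType (@cylinders A a0).

Definition shift (A : finType) (a0 : A) (a : @AZ A a0) : @AZ A a0 :=
  fun i => a (i + 1).

Definition tau0 (A : finType) (a0 : A) (x y : A) : A := if x == y then x else a0.
Definition tau (A : finType) (a0 : A) (a : @AZ A a0) : @AZ A a0 :=
  fun i => tau0 a0 (a i) (a (i + 1)).

Definition shift_invariant (R : realType) (A : finType) (a0 : A)
  (nu : probability (@AZ A a0) R) : Prop :=
  forall B : set (@AZ A a0), measurable B -> nu (@shift A a0 @^-1` B) = nu B.

(* For f : A^Z -> A^Z, the finite-valued process eta_i(a) = (f a)_i
   (with f = tau^n this is tau^n xi).  Law of the block eta_[0,m]: *)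
Definition block_prob (R : realType) (A : finType) (a0 : A)
  (nu : probability (@AZ A a0) R) (f : @AZ A a0 -> @AZ A a0) (m : nat)
  (w : {ffun 'I_m.+1 -> A}) : R :=
  fine (nu [set a : @AZ A a0 | forall i : 'I_m.+1, f a (Posz (val i)) = w i]).

(* Shannon entropy H_nu(eta_[0,m]) (natural log; 0 log 0 = 0). *)
Definition block_entropy (R : realType) (A : finType) (a0 : A)
  (nu : probability (@AZ A a0) R) (f : @AZ A a0 -> @AZ A a0) (m : nat) : R :=
  - \sum_(w : {ffun 'I_m.+1 -> A})
      block_prob nu f w * ln (block_prob nu f w).

Definition process_entropy (R : realType) (A : finType) (a0 : A)
  (nu : probability (@AZ A a0) R) (f : @AZ A a0 -> @AZ A a0) : R :=
  limn (fun m : nat => block_entropy nu f m / m%:R).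

From HB Require Import structures.
From mathcomp Require Import all_boot all_order all_algebra.
From mathcomp Require Import all_classical all_reals all_analysis.
From mathcomp Require Import zify ring lra.
Import Order.TTheory GRing.Theory Num.Theory.
Import numFieldTopology.Exports numFieldNormedType.Exports.
Set Implicit Arguments.
Unset Strict Implicit.
Unset Printing Implicit Defensive.
Local Open Scope classical_set_scope.
Local Open Scope ring_scope.

(* A coordinate of tau^n a is a_l when a is constant on [l, l + n] and the
   blank symbol 0 otherwise.  Hence two non-blank symbols of tau^n a at distance
   at most n enclose a constant run, so on each window of n consecutive sites
   tau^n a is determined by a symbol and the endpoints of an interval: at most
   #A n^2 possibilities.  A block of length m + 1 is covered by m %/ n + 1
   windows, so it takes at most (#A n^2)^(m %/ n + 1) values, and its entropy is
   at most (m / n + 1) log (#A n^2); dividing by m gives the bound in the limit. *)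

Section Entropy.
Variable R : realType.

Lemma neg_xlnx_le (x c : R) :
  0 <= x -> 0 < c -> - (x * ln x) <= x * ln c + c^-1 - x.
Proof.
move=> x0 c0; have [-> | x_neq0] := eqVneq x 0.
  by rewrite !mul0r oppr0 add0r addr0 invr_ge0 ltW.
have x_gt0 : 0 < x by rewrite lt0r x_neq0.
have xc_gt0 : 0 < x * c by rewrite mulr_gt0.
(* ln y <= y - 1 at y = 1 / (x c) *)
have ln_le : ln (x * c)^-1 <= (x * c)^-1 - 1.
  by rewrite -[X in ln X](addrNK 1) addrC le_ln1Dx // ltrBrDl subrr invr_gt0.
rewrite lnV ?posrE // lnM ?posrE // in ln_le.
have := ler_wpM2l (ltW x_gt0) ln_le.
rewrite mulrBr mulr1 invfM mulrA divff // mul1r mulrN mulrDr.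
lra.
Qed.

Lemma entropy_le_ln_card (I : finType) (p : I -> R) (S : {set I}) :
  (forall i, 0 <= p i) -> \sum_i p i = 1 -> (forall i, i \notin S -> p i = 0) ->
  - \sum_i p i * ln (p i) <= ln #|S|%:R.
Proof.
move=> p_ge0 p_sum1 p_supp.
have sumS : \sum_(i in S) p i = 1.
  by rewrite -p_sum1 [RHS](bigID (mem S)) /= [X in _ + X]big1 ?addr0 // => i /p_supp.
have S_gt0 : (0 < #|S|)%N.
  case: (set_0Vmem S) => [S0 | [i iS]]; last by apply/card_gt0P; exists i.
  by move: sumS; rewrite S0 big_set0 => /esym/eqP; rewrite oner_eq0.
set N : R := #|S|%:R; have N_gt0 : 0 < N by rewrite ltr0n.
rewrite -sumrN (bigID (mem S)) /= [X in _ + X]big1 ?addr0 => [|i /p_supp ->]; last first.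
  by rewrite mul0r oppr0.
apply: le_trans (ler_sum _ (fun i _ => neg_xlnx_le (p_ge0 i) N_gt0)) _.
rewrite !big_split /= sumrN -mulr_suml sumS sumr_const -/N.
by rewrite -[_ *+ #|S|]mulr_natr mulVf ?gt_eqF // mul1r addrK.
Qed.

End Entropy.

Lemma limn_rate_le (R : realType) (H : nat -> R) (L : R) (n : nat) :
  (0 < n)%N -> 0 <= L -> (forall m, H m <= (m %/ n).+1%:R * L) ->
  limn (fun m => H m / m%:R) <= L / n%:R.
Proof.
move=> n_gt0 L_ge0 HL; set u := fun m => _.
(* limn of a divergent sequence is the default point 0 *)
have [u_cvg | u_dvg] := pselect (cvgn u); last by rewrite dvgP // divr_ge0.
have inv_cvg : (fun m : nat => m%:R^-1) @ \oo --> (0 : R).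
  by rewrite -cvg_shiftS; exact: cvg_harmonic.
have bound_cvg : (fun m : nat => L / n%:R + L * m%:R^-1) @ \oo --> L / n%:R.
  rewrite -[X in _ --> X]addr0 -(mulr0 L).
  by apply: cvgD; [exact: cvg_cst | apply: cvgM => //; exact: cvg_cst].
apply: (ler_cvg_to u_cvg bound_cvg); near=> m.
have m_gt0 : 0 < m%:R :> R by rewrite ltr0n; near: m; exact: nbhs_infty_gt.
have blocks_le : (m %/ n).+1%:R <= m%:R / n%:R + 1 :> R.
  rewrite -addn1 natrD lerD2r ler_pdivlMr ?ltr0n // -natrM ler_nat.
  exact: leq_trunc_div.
have -> : L / n%:R + L * m%:R^-1 = (m%:R / n%:R + 1) * L * m%:R^-1.
  by field; rewrite (gt_eqF m_gt0) pnatr_eq0 -lt0n n_gt0.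
apply: ler_wpM2r; first by rewrite invr_ge0 ltW.
exact: le_trans (HL m) (ler_wpM2r L_ge0 blocks_le).
Unshelve. all: by end_near.
Qed.

Section IteratedAutomaton.
Variables (A : finType) (a0 : A).
Implicit Types (a : AZ a0) (l : int) (n : nat).

Definition const_run a l n : bool := [forall t : 'I_n.+1, a (l + t%:Z) == a l].

Lemma const_runP a l n :
  reflect (forall k : int, 0 <= k <= n%:Z -> a (l + k) = a l) (const_run a l n).
Proof.
apply: (iffP forallP) => [H [m|//] /andP[_ mn] | H t].
  by rewrite lez_nat -ltnS in mn; exact/eqP/(H (Ordinal mn)).
by apply/eqP/H; have := ltn_ord t; lia.
Qed.

Lemma const_run0 a l : const_run a l 0.
Proof.
apply/const_runP => k kn.
suff -> : k = 0 by rewrite addr0.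
lia.
Qed.

Lemma const_run_widen a l n : const_run a l n.+1 -> const_run a l n.
Proof. by move/const_runP => H; apply/const_runP => k kn; apply: H; lia. Qed.

Lemma const_runS a l n :
  const_run a l n.+1 = (a (l + 1) == a l) && const_run a (l + 1) n.
Proof.
apply/const_runP/andP => [H | [/eqP E /const_runP H] k kn].
  have E : a (l + 1) = a l by apply: H.
  split; first exact/eqP.
  by apply/const_runP => k kn; rewrite E -addrA H //; lia.
have [-> | k0] := eqVneq k 0; first by rewrite addr0.
have -> : l + k = l + 1 + (k - 1) by lia.
by rewrite H -?E //; lia.
Qed.

Lemma iter_tauE n a l :
  iter n (@tau A a0) a l = if const_run a l n then a l else a0.
Proof.
elim: n l => [|n IH] l; first by rewrite const_run0.
rewrite /= {1}/tau /tau0 !IH const_runS.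
case P1: (const_run a (l + 1) n); last by rewrite andbF; case: ifP => // /eqP.
have [E | NE] := eqVneq (a (l + 1)) (a l).
  have -> : const_run a l n by apply: const_run_widen; rewrite const_runS E eqxx P1.
  by rewrite E eqxx.
case: (const_run a l n); last by case: ifP.
by rewrite eq_sym (negbTE NE).
Qed.

Lemma iter_tau_run n a l1 l l2 :
  iter n (@tau A a0) a l1 != a0 -> iter n (@tau A a0) a l2 != a0 ->
  l1 <= l <= l2 -> l2 <= l1 + n%:Z ->
  iter n (@tau A a0) a l = iter n (@tau A a0) a l1.
Proof.
rewrite !iter_tauE.
case: (const_runP a l1 n) => [H1 _ | _]; last by rewrite eqxx.
case: (const_runP a l2 n) => [H2 _ | _]; last by rewrite eqxx.
move=> /andP[l1l ll2] l2l1.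
have const_a : forall u, l1 <= u <= l2 + n%:Z -> a u = a l1.
  move=> u /andP[u1 u2]; have [ul1n | l1nu] := lerP u (l1 + n%:Z).
    have -> : u = l1 + (u - l1) by lia.
    by rewrite H1 //; lia.
  have -> : u = l2 + (u - l2) by lia.
  rewrite H2; last lia.
  have -> : l2 = l1 + (l2 - l1) by lia.
  by rewrite H1 //; lia.
have -> : const_run a l n.
  by apply/const_runP => k kn; rewrite !const_a //; lia.
by apply: const_a; lia.
Qed.

End IteratedAutomaton.

Section BlockWords.
Variables (A : finType) (a0 : A) (n : nat).

Definition window_constant (b : nat -> A) : Prop :=
  forall l1 l l2, b l1 != a0 -> b l2 != a0 ->
  (l1 <= l <= l2)%N -> (l2 <= l1 + n)%N -> b l = b l1.

(* (x, s, e) encodes the window that equals x on [s, e] and a0 elsewhere. *)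
Definition decode_window (w : A * 'I_n * 'I_n) (j : nat) : A :=
  if (w.1.2 <= j <= w.2)%N then w.1.1 else a0.

Definition decode_blocks m (c : {ffun 'I_(m %/ n).+1 -> A * 'I_n * 'I_n}) :
    {ffun 'I_m.+1 -> A} :=
  [ffun i : 'I_m.+1 => decode_window (c (inord (i %/ n))) (i %% n)].

Definition block_words m : {set {ffun 'I_m.+1 -> A}} :=
  [set decode_blocks c | c : {ffun 'I_(m %/ n).+1 -> A * 'I_n * 'I_n}].

Lemma card_block_words m :
  (#|block_words m| <= (#|A| * n ^ 2) ^ (m %/ n).+1)%N.
Proof.
apply: leq_trans (leq_imset_card _ _) _.
by rewrite card_ffun !card_prod !card_ord -mulnA.
Qed.

Hypothesis n_gt0 : (0 < n)%N.

Lemma window_constant_decode_window b p : window_constant b ->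
  exists w, forall j : 'I_n, b (p + j)%N = decode_window w j.
Proof.
move=> bP; pose nz (j : 'I_n) := b (p + j)%N != a0.
have [j0 nz_j0 | nz0] := pickP nz; last first.
  exists (a0, Ordinal n_gt0, Ordinal n_gt0) => j; rewrite /decode_window.
  by have /negbFE/eqP -> := nz0 j; case: ifP.
have [s nz_s s_min] := arg_minnP (fun j : 'I_n => val j) nz_j0.
have [e nz_e e_max] := arg_maxnP (fun j : 'I_n => val j) nz_j0.
exists (b (p + s)%N, s, e) => j; rewrite /decode_window /=.
case: ifP => [sje | /negbT outside].
  apply: bP nz_s nz_e _ _; have := ltn_ord e; lia.
apply/eqP/negPn/negP => nz_j.
by move: outside; rewrite (s_min j nz_j) (e_max j nz_j : j <= e)%N.
Qed.

Lemma window_constant_block_words b m : window_constant b ->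
  [ffun i : 'I_m.+1 => b i] \in block_words m.
Proof.
move=> bP; have /fin_all_exists [c cP] : forall q : 'I_(m %/ n).+1,
    exists w, forall j : 'I_n, b (q * n + j)%N = decode_window w j.
  by move=> q; apply: window_constant_decode_window.
apply/imsetP; exists (finfun c) => //; apply/ffunP => i.
rewrite !ffunE; have iq : (i %/ n < (m %/ n).+1)%N.
  by rewrite ltnS leq_div2r // -ltnS.
by rewrite -(cP _ (Ordinal (ltn_pmod i n_gt0))) /= inordK // -divn_eq.
Qed.

End BlockWords.

Section BlockDistribution.
Variables (A : finType) (a0 : A).

Lemma cylinder_measurable (i : int) (x : A) :
  measurable [set a : AZ a0 | a i = x].
Proof. by apply: sub_sigma_algebra; exists i, x. Qed.

Lemma tau_measurable : measurable_fun setT (@tau A a0).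
Proof.
apply: (@measurability _ _ (AZ a0) (AZ a0) _ _ (@cylinders A a0)) => //.
move=> _ [_ [i [x ->]] <-]; rewrite setTI.
have -> : @tau A a0 @^-1` [set a | a i = x] =
    \bigcup_(yz in [set yz : A * A | tau0 a0 yz.1 yz.2 = x])
      ([set a : AZ a0 | a i = yz.1] `&` [set a | a (i + 1) = yz.2]).
  apply/seteqP; split => [a /= <- | a [yz /= <- [/= <- <-]]] //.
  by exists (a i, a (i + 1)).
apply: fin_bigcup_measurable; first exact: finite_finset.
by move=> yz _; apply: measurableI; exact: cylinder_measurable.
Qed.

Lemma iter_tau_measurable n : measurable_fun setT (iter n (@tau A a0)).
Proof.
elim: n => [|n IH] /=; first exact: measurable_id.
exact: measurableT_comp tau_measurable IH.
Qed.

Definition block_word (f : AZ a0 -> AZ a0) m (a : AZ a0) : {ffun 'I_m.+1 -> A} :=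
  [ffun i : 'I_m.+1 => f a (Posz i)].

Variables (R : realType) (nu : probability (AZ a0) R).
Variables (f : AZ a0 -> AZ a0) (m : nat).
Hypothesis mf : measurable_fun setT f.

Lemma block_word_measurable w : measurable [set a | block_word f m a = w].
Proof.
have -> : [set a | block_word f m a = w] =
    setT `&` f @^-1` \bigcap_(i in [set: 'I_m.+1]) [set b | b (Posz i) = w i].
  apply/seteqP; split => [a /= <- | a /= [_ aw]]; first by split=> // i _; rewrite ffunE.
  by apply/ffunP => i; rewrite ffunE; apply: aw.
apply: mf => //; apply: fin_bigcap_measurable; first exact: finite_finset.
by move=> i _; exact: cylinder_measurable.
Qed.

Lemma block_probE (w : {ffun 'I_m.+1 -> A}) :
  block_prob nu f w = fine (nu [set a | block_word f m a = w]).
Proof.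
congr (fine (nu _)); apply/seteqP; split => a /= aw.
  by apply/ffunP => i; rewrite ffunE.
by move=> i; rewrite -aw ffunE.
Qed.

Lemma block_prob_ge0 (w : {ffun 'I_m.+1 -> A}) : 0 <= block_prob nu f w.
Proof. exact/fine_ge0/measure_ge0. Qed.

Lemma sum_block_prob : \sum_(w : {ffun 'I_m.+1 -> A}) block_prob nu f w = 1.
Proof.
under eq_bigr do rewrite block_probE.
rewrite sum_fine; last by move=> w _; apply: fin_num_measure; exact: block_word_measurable.
have -> : (\sum_(w : {ffun 'I_m.+1 -> A}) nu [set a | block_word f m a = w])%E =
    nu (\bigcup_(w in [set: {ffun 'I_m.+1 -> A}]) [set a | block_word f m a = w]).
  rewrite measure_fin_bigcup //.
  - rewrite (fsbigE (enum {ffun 'I_m.+1 -> A})) ?enum_uniq //.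
      by rewrite big_enum_cond /=; apply: eq_bigl => w; rewrite in_setT.
    by move=> w _; rewrite mem_enum.
  - exact: finite_finset.
  - by move=> w1 w2 _ _ [a [/= <- <-]].
  - by move=> w _; exact: block_word_measurable.
have -> : \bigcup_(w in [set: {ffun 'I_m.+1 -> A}]) [set a | block_word f m a = w] = setT.
  by apply/seteqP; split => // a _; exists (block_word f m a).
by rewrite probability_setT.
Qed.

Lemma block_entropy_le_ln_card (S : {set {ffun 'I_m.+1 -> A}}) :
  (forall a, block_word f m a \in S) -> block_entropy nu f m <= ln #|S|%:R.
Proof.
move=> wordS; apply: entropy_le_ln_card.
- exact: block_prob_ge0.
- exact: sum_block_prob.
- move=> w wS; rewrite block_probE.
  suff -> : [set a | block_word f m a = w] = set0 by rewrite measure0.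
  by apply/seteqP; split => // a /= aw; move: wS; rewrite -aw wordS.
Qed.

End BlockDistribution.

Lemma block_word_iter_tau (A : finType) (a0 : A) n m (a : AZ a0) :
  (0 < n)%N -> block_word (iter n (@tau A a0)) m a \in block_words a0 n m.
Proof.
move=> n_gt0.
apply: (window_constant_block_words n_gt0 (b := fun l : nat => iter n _ a l)).
move=> l1 l l2 nz1 nz2 l_mid l2_near.
by apply: iter_tau_run nz1 nz2 _ _; lia.
Qed.

Lemma block_entropy_iter_tau_le (R : realType) (A : finType) (a0 : A)
    (nu : probability (AZ a0) R) n m : (0 < n)%N ->
  block_entropy nu (iter n (@tau A a0)) m <=
    (m %/ n).+1%:R * ln (#|A|%:R * n%:R ^+ 2).
Proof.
move=> n_gt0; have wordS a := @block_word_iter_tau A a0 n m a n_gt0.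
apply: le_trans (block_entropy_le_ln_card nu (iter_tau_measurable n) wordS) _.
have words_gt0 : (0 < #|block_words a0 n m|)%N.
  by apply/card_gt0P; exists (block_word (iter n (@tau A a0)) m point).
have A_gt0 : (0 < #|A|)%N by apply/card_gt0P; exists a0.
rewrite mulr_natl -lnXn ?mulr_gt0 ?exprn_gt0 ?ltr0n //.
rewrite ler_ln ?posrE ?exprn_gt0 ?mulr_gt0 ?ltr0n //.
by rewrite -natrX -natrM -natrX ler_nat card_block_words.
Qed.

Theorem proposition4p1 (R : realType) (A : finType) (a0 : A)
    (nu : probability (@AZ A a0) R) :
  shift_invariant nu ->
  forall n : nat, (0 < n)%N ->
    process_entropy nu (iter n (@tau A a0)) <=
      ln (#|A|%:R * n%:R ^+ 2) / n%:R.
Proof.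
move=> _ n n_gt0.
have L_ge0 : 0 <= ln (#|A|%:R * n%:R ^+ 2) :> R.
  rewrite -natrX -natrM ln_ge0 // ler1n muln_gt0 expn_gt0 n_gt0 andbT.
  by apply/card_gt0P; exists a0.
exact: limn_rate_le n_gt0 L_ge0 (fun m => block_entropy_iter_tau_le nu m n_gt0).
Qed.
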